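(* Let $G$ be a finite connected bipartite $\mathcal{C}$-$\mathrm{HH}$ graph with bipartition $(X,Y)$. (i) If the $6$-cycle $C_6$ or the two-squares graph embeds in $G$, then $\mathrm{diam}(G)=3$. (ii) If $\mathrm{diam}(G)=3$, then for each $k\le\Delta(G)$ every $k$-element subset of $X$ and every $k$-element subset of $Y$ has a common neighbour.
   Context: Subgraphs are induced; ''embeds'' means is isomorphic to an induced subgraph. A homomorphism maps edges to edges. A graph $G$ is $\mathcal{C}$-$\mathrm{HH}$ if every homomorphism from a finite connected induced subgraph of $G$ into $G$ extends to a homomorphism $G\to G$. The two-squares graph is the $6$-cycle $v_1\dots v_6v_1$ with the single chord $v_3v_6$. $\mathrm{diam}(G)$ is the diameter and $\Delta(G)$ the maximum degree. A common neighbour of a vertex set $S$ is a vertex adjacent to every vertex of $S$. *)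

From mathcomp Require Import all_boot.
Set Implicit Arguments. Unset Strict Implicit. Unset Printing Implicit Defensive.

Section Graphs.
Variable T : finType.
Variable e : rel T.

Definition simple_graph : Prop := symmetric e /\ irreflexive e.

Definition connected_graph : Prop := 0 < #|T| /\ forall x y : T, connect e x y.

Definition induced_rel (S : {set T}) : rel T :=
  fun x y => [&& x \in S, y \in S & e x y].

Definition induced_connected (S : {set T}) : Prop :=
  S != set0 /\ {in S &, forall x y, connect (induced_rel S) x y}.

(* a homomorphism from the induced subgraph G[S] into G, represented by a map
   T -> T of which only the values on S matter *)
Definition hom_from_induced (S : {set T}) (f : T -> T) : Prop :=
  {in S &, forall x y, e x y -> e (f x) (f y)}.

Definition graph_endo (g : T -> T) : Prop := forall x y, e x y -> e (g x) (g y).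

Definition CHH : Prop :=
  forall (S : {set T}) (f : T -> T),
    induced_connected S -> hom_from_induced S f ->
    exists g : T -> T, graph_endo g /\ {in S, forall x, g x = f x}.

Definition bipartition (X Y : {set T}) : Prop :=
  [/\ X :&: Y = set0, X :|: Y = setT & forall x y, e x y -> (x \in X) = (y \in Y)].

Definition walk_len (n : nat) (x y : T) : Prop :=
  exists p : seq T, [/\ size p = n, path e x p & last x p = y].

Definition dist_eq (x y : T) (d : nat) : Prop :=
  walk_len d x y /\ forall n, n < d -> ~ walk_len n x y.

Definition diam_eq (d : nat) : Prop :=
  (forall x y, exists2 n, n <= d & walk_len n x y) /\
  (exists x y, dist_eq x y d).

Definition degree (x : T) : nat := #|[set y | e x y]|.

Definition maxdeg : nat := \max_(x : T) degree x.

Definition common_neighbour (A : {set T}) (v : T) : Prop := forall a, a \in A -> e a v.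

Definition embeds (n : nat) (H : rel 'I_n) : Prop :=
  exists f : 'I_n -> T, injective f /\ forall i j, e (f i) (f j) = H i j.

End Graphs.

(* the 6-cycle on vertices 0..5 (v_{i+1} = i) *)
Definition C6_rel : rel 'I_6 :=
  fun i j => (j == (i.+1 %% 6) :> nat) || (i == (j.+1 %% 6) :> nat).

(* the two-squares graph: C6 v1..v6 with the chord v3v6, i.e. vertices 2 and 5 *)
Definition two_squares_rel : rel 'I_6 :=
  fun i j => C6_rel i j || ((i == 2 :> nat) && (j == 5 :> nat))
                        || ((i == 5 :> nat) && (j == 2 :> nat)).

From mathcomp Require Import all_boot zify.
Set Implicit Arguments. Unset Strict Implicit. Unset Printing Implicit Defensive.

(* (i) Both graphs contain an induced path c0 ... c4 together with a vertex m
   adjacent to c0 and c4.  Any walk q0 ... q4 is the image of this path under a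
   homomorphism, and an endomorphism g extending it makes g m a common neighbour
   of q0 and q4.  So walks shrink by two until their length is at most 3, while
   c0 and c3 are at distance exactly 3 by parity.
   (ii) Diameter 3 gives any two vertices on the same side a common neighbour.
   In a minimal set A on one side without a common neighbour, each A \ {a} has a
   common neighbour v a, not adjacent to a, so A and v(A) span a crown.  Extending
   a suitable partial homomorphism shows that every neighbour of v a lies in A;
   applied to the crown on v(A), every neighbour of a lies in v(A).  By
   connectivity G is this crown, whence Delta(G) = |A| - 1 < |A|. *)

Lemma card_lt_exists (T : finType) (A B : {set T}) :
  #|B| < #|A| -> exists2 x, x \in A & x \notin B.
Proof.
move=> ltBA; apply/subsetPn; apply: contraTN ltBA => /subset_leq_card.
by rewrite -leqNgt.
Qed.

Section GraphFacts.
Variables (T : finType) (e : rel T).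

Lemma walk_len0 x y : walk_len e 0 x y -> x = y.
Proof. by case=> -[|? ?] []. Qed.

Lemma walk_lenS n x y : walk_len e n.+1 x y -> exists2 w, e x w & walk_len e n w y.
Proof. by case=> -[|w p] [] //= [sz] /andP[exw pw] <-; exists w => //; exists p. Qed.

Lemma connect_walk_len x y : connect e x y -> exists n, walk_len e n x y.
Proof. by case/connectP => p pth ->; exists (size p), p. Qed.

Lemma degree_lt_card x u (C : {set T}) :
  (forall y, e x y -> y \in C) -> u \in C -> ~~ e x u -> degree e x < #|C|.
Proof.
move=> sub uC nexu; apply/proper_card/properP; split.
  by apply/subsetP => y; rewrite inE; apply: sub.
by exists u; rewrite // inE.
Qed.

Lemma connected_neighbour :
  connected_graph e -> 0 < maxdeg e -> forall a, exists w, e a w.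
Proof.
move=> [T0 conn] deg0 a; have [x xmax] := eq_bigmax (degree e) T0.
have [y exy] : exists y, e x y.
  by move: deg0; rewrite /maxdeg xmax => /card_gt0P[y]; rewrite inE; exists y.
have [->|ax] := eqVneq a x; first by exists y.
case/connectP: (conn a x) => -[/= _ ax'|w p /= /andP[aw _] _]; last by exists w.
by rewrite ax' eqxx in ax.
Qed.

Lemma induced_connected_hub (S : {set T}) r :
  symmetric e -> r \in S -> {in S, forall x, connect (induced_rel e S) x r} ->
  induced_connected e S.
Proof.
move=> sym_e rS hub; split; first by apply/set0Pn; exists r.
have Rsym : symmetric (induced_rel e S).
  by move=> x y; rewrite /induced_rel andbCA sym_e.
move=> x y xS yS; apply: connect_trans (hub x xS) _.
by rewrite (sym_connect_sym Rsym); apply: hub.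
Qed.

Definition two_colouring (s : T -> bool) := forall x y, e x y -> s y = ~~ s x.

Variable s : T -> bool.
Hypothesis hcol : two_colouring s.

Lemma two_colouring_irr : irreflexive e.
Proof. by move=> x; apply/negP => /hcol; case: (s x). Qed.

Lemma walk_len_colour n x y : walk_len e n x y -> s y = odd n (+) s x.
Proof.
case=> p [<- pth <-]; elim: p x pth => //= w p IH x /andP[/hcol sw /IH ->].
by rewrite sw addbN addNb.
Qed.

Lemma dist_eq3 x y : x != y -> ~~ e x y -> walk_len e 3 x y -> dist_eq e x y 3.
Proof.
move=> xy nexy w3; split=> // -[|[|[|n]]] // _ w.
- by rewrite (walk_len0 w) eqxx in xy.
- by case/walk_lenS: w => z exz /walk_len0 zy; rewrite -zy exz in nexy.
- by have := walk_len_colour w; rewrite (walk_len_colour w3); case: (s x).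
Qed.

Lemma diam3_common_neighbour :
  (forall x y, exists2 n, n <= 3 & walk_len e n x y) ->
  forall x y, x != y -> s x = s y -> exists2 w, e x w & e w y.
Proof.
move=> hdiam x y xy sxy; have [[|[|[|[|n]]]] // _ w] := hdiam x y.
- by rewrite (walk_len0 w) eqxx in xy.
- by have := walk_len_colour w; rewrite sxy; case: (s y).
- by case/walk_lenS: w => z exz /walk_lenS [t ezt /walk_len0 <-]; exists z.
- by have := walk_len_colour w; rewrite sxy; case: (s y).
Qed.

End GraphFacts.

Lemma bipartition_sym (T : finType) (e : rel T) X Y :
  symmetric e -> bipartition e X Y -> bipartition e Y X.
Proof.
move=> sym_e [XY XUY hb]; split; [by rewrite setIC | by rewrite setUC |].
by move=> x y exy; rewrite (hb y x) // sym_e.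
Qed.

Lemma bipartition_colouring (T : finType) (e : rel T) X Y :
  symmetric e -> bipartition e X Y -> two_colouring e (fun x => x \in X).
Proof.
move=> sym_e [XY XUY hb] x y exy; rewrite (hb y x); last by rewrite sym_e.
move/setP/(_ x): XY; move/setP/(_ x): XUY; rewrite !inE.
by case: (x \in X); case: (x \in Y).
Qed.

Section InducedPaths.
Variables (T : finType) (e : rel T).

Definition induced_path n (c : 'I_n.+1 -> T) :=
  injective c /\ forall i j : 'I_n.+1, e (c i) (c j) = (i.+1 == j) || (j.+1 == i).

Definition shortcut_walks n :=
  forall q : nat -> T, (forall i, i < n -> e (q i) (q i.+1)) ->
  exists2 z, e (q 0) z & e z (q n).

(* Deleting [v_1] from [C6], resp. [v_6] from the two-squares graph, leaves an
   induced path [P5] whose two ends are adjacent to the deleted vertex. *)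
Lemma C6_two_squares_induced_path :
  embeds e C6_rel \/ embeds e two_squares_rel ->
  exists (c : 'I_5 -> T) m, [/\ induced_path c, e (c ord0) m & e m (c ord_max)].
Proof.
case=> -[f [finj hf]].
  exists (f \o lift ord0), (f ord0); split; rewrite /= ?hf //.
  split=> [|i j]; first exact: inj_comp finj (@lift_inj _ ord0).
  by rewrite /= hf; case: i j => -[|[|[|[|[|?]]]]] ? [[|[|[|[|[|?]]]]] ?].
exists (f \o widen_ord (leqnSn 5)), (f ord_max); split; rewrite /= ?hf //.
split=> [i j /finj [] /val_inj //|i j].
by rewrite /= hf; case: i j => -[|[|[|[|[|?]]]]] ? [[|[|[|[|[|?]]]]] ?].
Qed.

Lemma shortcut_walk_len n x y :
  shortcut_walks 4 -> walk_len e n x y -> exists2 k, k <= 3 & walk_len e k x y.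
Proof.
move=> hsc; have [N] := ubnP n; elim: N n x y => // N IH n x y nN w.
have [n3|n4] := leqP n 3; first by exists n.
case: w => -[|q1 [|q2 [|q3 [|q4 p]]]] [/= sz]; try by rewrite -sz in n4.
move=> /and5P[e1 e2 e3 e4 pth] lst.
have [z exz ezq4] : exists2 z, e x z & e z q4.
  by apply: (hsc (nth x [:: x; q1; q2; q3; q4])); case=> [|[|[|[|i]]]].
apply: (IH (size p).+2); first by lia.
by exists [:: z, q4 & p]; split; rewrite //= exz ezq4.
Qed.

Lemma shortcut_diam3 :
  connected_graph e -> shortcut_walks 4 -> (exists x y, dist_eq e x y 3) ->
  diam_eq e 3.
Proof.
move=> [_ conn] hsc far; split=> // x y.
by have [n] := connect_walk_len (conn x y); apply: shortcut_walk_len.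
Qed.

Lemma induced_path_dist3 (s : T -> bool) n (c : 'I_n.+1 -> T) :
  two_colouring e s -> 2 < n -> induced_path c -> exists x y, dist_eq e x y 3.
Proof.
move=> hcol n2 [cinj cadj].
have adj k l : k <= n -> l <= n ->
    e (c (inord k)) (c (inord l)) = (k.+1 == l) || (l.+1 == k).
  by move=> kn ln; rewrite cadj !inordK.
exists (c (inord 0)), (c (inord 3)); apply: (dist_eq3 hcol).
- by rewrite (inj_eq cinj) -val_eqE /= !inordK.
- by rewrite adj // ltnW.
- by exists [:: c (inord 1); c (inord 2); c (inord 3)]; rewrite /= !adj //; lia.
Qed.

Hypotheses (sym_e : symmetric e) (chh : CHH e).

Lemma induced_path_shortcut n (c : 'I_n.+1 -> T) m :
  induced_path c -> e (c ord0) m -> e m (c ord_max) -> shortcut_walks n.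
Proof.
move=> [cinj cadj] e0m emn q hq.
pose f x := if [pick i | c i == x] is Some i then q i else x.
have fc i : f (c i) = q i.
  by rewrite /f; case: pickP => [j /eqP/cinj -> | /(_ i)]; rewrite ?eqxx.
pose S := [set c i | i : 'I_n.+1].
have cS i : c i \in S by apply: imset_f.
have hom : hom_from_induced e S f.
  move=> _ _ /imsetP[i _ ->] /imsetP[j _ ->]; rewrite cadj !fc.
  by case/orP=> /eqP ij; [|rewrite sym_e]; rewrite -ij; apply: hq; rewrite -ltnS ij.
have conn : induced_connected e S.
  apply: (induced_connected_hub sym_e (cS ord0)) => _ /imsetP[[k hk] _ ->].
  elim: k hk => [hk|k IH hk].
    by rewrite (_ : Ordinal hk = ord0) ?connect0 //; apply: val_inj.
  apply: connect_trans (IH (ltnW hk)); apply: connect1.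
  by rewrite /induced_rel !cS cadj /= eqxx orbT.
have [g [gendo gf]] := chh conn hom.
exists (g m).
- by have := gendo _ _ e0m; rewrite gf // fc.
- by have := gendo _ _ emn; rewrite (gf (c ord_max)) // fc.
Qed.

End InducedPaths.

Section Crowns.
Variables (T : finType) (e : rel T) (s : T -> bool).

Definition crown_on (A : {set T}) (v : T -> T) :=
  {in A &, forall a b, e b (v a) = (b != a)}.

Lemma common_neighbourP (A : {set T}) :
  reflect (exists c, common_neighbour e A c) [exists c, [forall a in A, e a c]].
Proof.
apply: (iffP existsP) => -[c hc]; exists c; last exact/forall_inP.
by move=> a; apply: (forall_inP hc).
Qed.

Lemma crown_of_critical (A : {set T}) :
  ~ (exists c, common_neighbour e A c) ->
  (forall B : {set T}, B \proper A -> exists c, common_neighbour e B c) ->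
  exists v, crown_on A v.
Proof.
move=> nocn hproper.
have [v hv] : exists v : T -> T, forall a, a \in A -> common_neighbour e (A :\ a) (v a).
  apply: (@fin_all_exists _ (fun=> T)
            (fun a c => a \in A -> common_neighbour e (A :\ a) c)).
  move=> a; have [aA|_] := boolP (a \in A); last by exists a.
  by have [c hc] := hproper _ (properD1 aA); exists c.
exists v => a a' aA a'A; have [->|a'a] := eqVneq a' a; last first.
  by apply: hv; rewrite // !inE a'a.
apply/negbTE/negP => eav; apply: nocn; exists (v a) => a'' a''A.
by have [->|a''a] := eqVneq a'' a; last by apply: hv; rewrite // !inE a''a.
Qed.

Hypotheses (sym_e : symmetric e) (hcol : two_colouring e s) (chh : CHH e).
Hypothesis same_side_cn : forall x y, x != y -> s x = s y -> exists2 w, e x w & e w y.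

Section CrownOn.
Variables (A : {set T}) (v : T -> T) (b : bool).
Hypotheses (hv : crown_on A v) (hA : {in A, forall a, s a = b}) (A3 : 2 < #|A|).

Lemma crown_inj : {in A &, injective v}.
Proof.
move=> a a' aA a'A vaa'; apply/eqP/negPn.
by rewrite -(hv a'A aA) -vaa' hv // eqxx.
Qed.

Lemma crown_side : {in A, forall a, s (v a) = ~~ b}.
Proof.
move=> a aA; have [a' a'A] : exists2 a', a' \in A & a' \notin [set a].
  by apply: card_lt_exists; rewrite cards1; apply: ltnW.
rewrite inE => a'a; have ea'v : e a' (v a) by rewrite hv.
by rewrite (hcol ea'v) hA.
Qed.

Lemma crown_proper_common_neighbour (B : {set T}) :
  B \proper A -> exists c, common_neighbour e B c.
Proof.
case/properP=> BA [a aA aB]; exists (v a) => a' a'B.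
rewrite hv //; last exact: (subsetP BA).
by apply: contraNneq aB => <-.
Qed.

Lemma crown_image : exists2 w, {in A, cancel v w} & crown_on (v @: A) w.
Proof.
pose w x := odflt x [pick a in A | v a == x].
have vK : {in A, cancel v w}.
  move=> a aA; rewrite /w; case: pickP => [a' /andP[a'A /eqP /crown_inj] -> // | /(_ a)].
  by rewrite aA eqxx.
exists w => // _ _ /imsetP[a aA ->] /imsetP[a' a'A ->].
by rewrite vK // sym_e hv // (inj_in_eq crown_inj) // eq_sym.
Qed.

Section Extension.
Variables (m z y c : T).
Hypotheses (mA : m \in A) (evz : e (v m) z) (zA : z \notin A).
Hypotheses (ezy : e z y) (eym : e y m) (hc : common_neighbour e [set a in A | e y a] c).

Let S := A :|: [set v j | j in A :\ m] :|: [set z; y].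
Let f x := if x == z then m else if x == y then c else x.

Let irr : irreflexive e. Proof. exact: two_colouring_irr hcol. Qed.
Let sz : s z = b. Proof. by rewrite (hcol evz) crown_side // negbK. Qed.
Let sy : s y = ~~ b. Proof. by rewrite (hcol ezy) sz. Qed.
Let yz : y != z. Proof. by apply: contraTneq ezy => ->; rewrite irr. Qed.
Let yA : y \notin A. Proof. by apply/negP => /hA; rewrite sy; case: b. Qed.
Let mS : m \in S. Proof. by rewrite !inE mA. Qed.
Let zS : z \in S. Proof. by rewrite !inE eqxx !orbT. Qed.
Let yS : y \in S. Proof. by rewrite !inE eqxx !orbT. Qed.
Let fz : f z = m. Proof. by rewrite /f eqxx. Qed.
Let fy : f y = c. Proof. by rewrite /f (negbTE yz) eqxx. Qed.

Let fE x : x \notin [set z; y] -> f x = x.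
Proof. by rewrite !inE negb_or => /andP[/negbTE xz /negbTE xy]; rewrite /f xz xy. Qed.

Let cB a : a \in A -> e y a -> e a c.
Proof. by move=> aA eya; apply: hc; rewrite inE aA. Qed.

Lemma extension_hom : hom_from_induced e S f.
Proof.
have hom_z x : x \in S -> e z x -> e m (f x).
  move=> xS ezx; have [->|xy] := eqVneq x y; first by rewrite fy cB.
  have xz : x != z by apply: contraTneq ezx => ->; rewrite irr.
  rewrite fE ?inE ?negb_or ?xz ?xy //.
  move: xS; rewrite !inE (negbTE xz) (negbTE xy) /= orbF.
  case/orP=> [xA|/imsetP[j /setD1P[jm jA] ->]]; last by rewrite hv // eq_sym.
  by move: (hcol ezx); rewrite hA // sz; case: b.
have hom_y x : x \in S -> e y x -> e c (f x).
  move=> xS eyx; have [->|xz] := eqVneq x z; first by rewrite fz sym_e cB.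
  have xy : x != y by apply: contraTneq eyx => ->; rewrite irr.
  rewrite fE ?inE ?negb_or ?xz ?xy // sym_e cB //.
  move: xS eyx; rewrite !inE (negbTE xz) (negbTE xy) /= orbF.
  case/orP=> [//|/imsetP[j /setD1P[_ jA] ->] /hcol].
  by rewrite crown_side // sy; case: b.
have hom_zy x x' : x \in [set z; y] -> x' \in S -> e x x' -> e (f x) (f x').
  by case/set2P=> ->; [rewrite fz; exact: hom_z | rewrite fy; exact: hom_y].
move=> x x' xS x'S exx'.
have [xzy|xzy] := boolP (x \in [set z; y]); first exact: hom_zy.
have [x'zy|x'zy] := boolP (x' \in [set z; y]); last by rewrite !fE.
by rewrite sym_e; apply: hom_zy; rewrite // sym_e.
Qed.

Lemma extension_connected : induced_connected e S.
Proof.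
have vS j : j \in A -> j != m -> v j \in S.
  by move=> jA jm; rewrite !inE imset_f ?orbT // !inE jm jA.
have edge x x' : x \in S -> x' \in S -> e x x' -> connect (induced_rel e S) x x'.
  by move=> xS x'S exx'; apply: connect1; apply/and3P.
have vm j : j \in A -> j != m -> connect (induced_rel e S) (v j) m.
  by move=> jA jm; apply: edge; rewrite ?vS // sym_e hv // eq_sym.
apply: (induced_connected_hub sym_e mS) => x.
rewrite !inE => /orP[/orP[xA|/imsetP[j /setD1P[jm jA] ->]]|/orP[]/eqP->].
- have [->|xm] := eqVneq x m; first exact: connect0.
  have [j jA] : exists2 j, j \in A & j \notin [set x; m].
    by apply: card_lt_exists; rewrite cards2 xm.
  rewrite !inE negb_or => /andP[jx jm]; apply: connect_trans (vm j jA jm).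
  by apply: edge; rewrite ?vS // ?inE ?xA // hv // eq_sym.
- exact: vm.
- exact: connect_trans (edge _ _ zS yS ezy) (edge _ _ yS mS eym).
- exact: edge.
Qed.

(* The neighbours of [v m] in [S] are [A :\ m], fixed by [f], and [z], sent to
   [m]; so an endomorphism extending [f] maps [v m] to a common neighbour of [A]. *)
Lemma crown_extend : exists c', common_neighbour e A c'.
Proof.
have [g [gendo gf]] := chh extension_connected extension_hom.
exists (g (v m)) => a aA; have [->|am] := eqVneq a m.
  by have := gendo z (v m); rewrite gf // fz; apply; rewrite sym_e.
have fa : f a = a.
  apply: fE; rewrite !inE negb_or; apply/andP.
  by split; [apply: contraNneq zA | apply: contraNneq yA] => <-.
have aS : a \in S by rewrite !inE aA.
by have := gendo a (v m); rewrite gf // fa; apply; rewrite hv.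
Qed.

End Extension.

Hypothesis nocn : ~ exists c, common_neighbour e A c.

Lemma crown_tip_nbr m z : m \in A -> e (v m) z -> z \in A.
Proof.
move=> mA evz; apply/negPn/negP => zA; apply: nocn.
have sz : s z = b by rewrite (hcol evz) crown_side // negbK.
have zm : z != m by apply: contraNneq zA => ->.
have [y ezy eym] := same_side_cn zm (etrans sz (esym (hA mA))).
have [BA|BA] := eqVneq [set a in A | e y a] A.
  by exists y => a; rewrite -BA inE sym_e => /andP[].
have [c hc] : exists c, common_neighbour e [set a in A | e y a] c.
  apply: crown_proper_common_neighbour; rewrite properEneq BA /=.
  by apply/subsetP => a; rewrite inE => /andP[].
exact: crown_extend mA evz zA ezy eym hc.
Qed.

End CrownOn.

Lemma crown_base_nbr A v b :
  crown_on A v -> {in A, forall a, s a = b} -> 2 < #|A| ->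
  ~ (exists c, common_neighbour e A c) ->
  forall a y, a \in A -> e a y -> y \in v @: A.
Proof.
move=> hv hA A3 nocn a y aA eay.
have [w vK hw] := crown_image hv.
have A3' : 2 < #|v @: A| by rewrite (card_in_imset (crown_inj hv)).
have hA' : {in v @: A, forall p, s p = ~~ b}.
  by move=> _ /imsetP[a' a'A ->]; apply: (crown_side hv hA A3).
have nocn' : ~ exists c, common_neighbour e (v @: A) c.
  case=> c hc; have cA : c \in A.
    by apply: (crown_tip_nbr hv hA A3 nocn aA); apply: hc; apply: imset_f.
  by have := hc _ (imset_f v cA); rewrite sym_e hv // eqxx.
rewrite -(vK a aA) in eay.
exact: (crown_tip_nbr hw hA' A3' nocn' (imset_f v aA) eay).
Qed.

Lemma crown_maxdeg A v b :
  connected_graph e -> crown_on A v -> {in A, forall a, s a = b} -> 2 < #|A| ->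
  ~ (exists c, common_neighbour e A c) -> maxdeg e < #|A|.
Proof.
move=> [T0 conn] hv hA A3 nocn.
have nbr_tip := crown_tip_nbr hv hA A3 nocn.
have nbr_base := crown_base_nbr hv hA A3 nocn.
have closedC : closed e (A :|: v @: A).
  suff out x y : x \in A :|: v @: A -> e x y -> y \in A :|: v @: A.
    by move=> x y exy; apply/idP/idP => /out; apply; rewrite // sym_e.
  rewrite !inE => /orP[xA|/imsetP[m mA ->]] exy; first by rewrite (nbr_base x) ?orbT.
  by rewrite (nbr_tip m).
have /card_gt0P[a0 a0A] : 0 < #|A| by apply: leq_trans A3.
rewrite /maxdeg; have [x ->] := eq_bigmax (degree e) T0.
have := closed_connect closedC (conn a0 x); rewrite !inE a0A.
case/esym/orP=> [xA|/imsetP[m mA ->]].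
  rewrite -(card_in_imset (crown_inj hv)); apply: (degree_lt_card (u := v x)).
  - by move=> y; apply: nbr_base.
  - exact: imset_f.
  - by rewrite hv // eqxx.
apply: (degree_lt_card (u := m)) => //; first by move=> y; apply: nbr_tip.
by rewrite sym_e hv // eqxx.
Qed.

Lemma small_side_common_neighbour (A : {set T}) b :
  connected_graph e -> {in A, forall a, s a = b} -> #|A| <= 2 -> #|A| <= maxdeg e ->
  exists c, common_neighbour e A c.
Proof.
move=> hconn hA A2 Adeg.
have : [|| #|A| == 0, #|A| == 1 | #|A| == 2] by case: #|A| A2 => [|[|[|]]].
case/or3P=> [|/cards1P[a defA]|/cards2P[a [a' [aa' defA]]]].
- rewrite cards_eq0 => /eqP ->; have /card_gt0P[x _] := hconn.1.
  by exists x => a; rewrite inE.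
- rewrite defA cards1 in Adeg; have [w aw] := connected_neighbour hconn Adeg a.
  by exists w => a'; rewrite defA inE => /eqP ->.
- have [w aw wa'] : exists2 w, e a w & e w a'.
    by apply: same_side_cn aa' _; rewrite !hA // defA !inE eqxx ?orbT.
  by exists w => x; rewrite defA !inE => /orP[]/eqP->; rewrite // sym_e.
Qed.

Lemma side_common_neighbour (A : {set T}) b :
  connected_graph e -> {in A, forall a, s a = b} -> #|A| <= maxdeg e ->
  exists c, common_neighbour e A c.
Proof.
move=> hconn; have [n] := ubnP #|A|; elim: n A => // n IH A An hA Adeg.
case: (common_neighbourP A) => [//|nocn].
have hproper (B : {set T}) : B \proper A -> exists c, common_neighbour e B c.
  move=> BA; have BsubA := proper_sub BA.
  apply: IH; first exact: leq_trans (proper_card BA) An.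
    by move=> a /(subsetP BsubA); apply: hA.
  exact: leq_trans (subset_leq_card BsubA) Adeg.
have [A2|A3] := leqP #|A| 2; first exact: small_side_common_neighbour hconn hA A2 Adeg.
have [v hv] := crown_of_critical nocn hproper.
by have := crown_maxdeg hconn hv hA A3 nocn; rewrite ltnNge Adeg.
Qed.

End Crowns.

Theorem lemma5p9 (T : finType) (e : rel T) (X Y : {set T}) :
  simple_graph e -> connected_graph e -> bipartition e X Y -> CHH e ->
  ((embeds e C6_rel \/ embeds e two_squares_rel) -> diam_eq e 3) /\
  (diam_eq e 3 -> forall k, k <= maxdeg e ->
     (forall A : {set T}, A \subset X -> #|A| = k -> exists v, common_neighbour e A v) /\
     (forall A : {set T}, A \subset Y -> #|A| = k -> exists v, common_neighbour e A v)).
Proof.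
move=> [sym_e _] hconn hXY chh.
have colX := bipartition_colouring sym_e hXY.
have colY := bipartition_colouring sym_e (bipartition_sym sym_e hXY).
split=> [hemb | [hdiam _] k hk].
  have [c [m [hc e0m emc]]] := C6_two_squares_induced_path hemb.
  apply: shortcut_diam3 hconn (induced_path_shortcut sym_e chh hc e0m emc) _.
  exact: induced_path_dist3 colX _ hc.
have side_cn (Z : {set T}) : two_colouring e (fun x => x \in Z) ->
    forall A : {set T}, A \subset Z -> #|A| = k -> exists v, common_neighbour e A v.
  move=> colZ A AZ Ak; have cnZ := diam3_common_neighbour colZ hdiam.
  apply: (side_common_neighbour sym_e colZ chh cnZ (b := true)) => //.
  - by move=> a /(subsetP AZ).
  - by rewrite Ak.
by split; [apply: side_cn colX | apply: side_cn colY].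
Qed.
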